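(* Fix integers $r\ge 1$ and $\Delta\ge 1$. For $m\ge 1$ put $n=m(r+1)$ and $k_0=mr$. There is a field size $q=O(n^{\Delta-1})$ (the implied constant depending only on $r$ and $\Delta$) such that for every $\Delta\times k_0$ matrix $H_{\mathrm{MDS}}$ over $\mathbb{F}_q$ that is a parity-check matrix of a $[k_0,k_0-\Delta]$ MDS code, there exist $x_{ij}\in\mathbb{F}_q$ ($1\le i\le m$, $1\le j\le r$) such that the code with parity-check matrix $$H=\begin{bmatrix} I_m & F\\ 0 & H_{\mathrm{MDS}}\end{bmatrix},$$ where $F$ is the $m\times k_0$ block-diagonal matrix whose $i$-th row has the block $\underline{x}_i^t=(x_{i1},x_{i2},\dots,x_{ir})$ in column positions $(i-1)r+1,\dots,ir$ and zeros elsewhere, is maximally recoverable.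
   Context: The code with parity-check matrix $H$ has length $n$, local groups $\{i\}\cup\{m+(i-1)r+1,\dots,m+ir\}$ for $i=1,\dots,m$ (one local parity per group) and $\Delta$ global parities. It is called maximally recoverable if it corrects every erasure pattern that is correctable by some code with this locality structure; equivalently, for every set $E$ of coordinates consisting of exactly one coordinate from each local group, puncturing the code on $E$ gives an MDS code of length $mr$ and dimension $mr-\Delta$. *)

From HB Require Import structures.
From mathcomp Require Import all_boot all_order all_algebra all_field.
Set Implicit Arguments. Unset Strict Implicit. Unset Printing Implicit Defensive.
Import GRing.Theory.
Local Open Scope ring_scope.

Section Codes.
Variable F : fieldType.

Definition wt (N : nat) (c : 'rV[F]_N) : nat := #|[set i | c 0 i != 0]|.

(* The linear code spanned by the rows of C (a row space, %MS) is an
   [N, K] MDS code: dimension K and minimum distance (at least, hence by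
   Singleton exactly) N - K + 1. *)
Definition MDS_code (p N : nat) (C : 'M[F]_(p, N)) (K : nat) : Prop :=
  \rank C = K /\
  forall c : 'rV[F]_N, (c <= C)%MS -> c != 0 -> (N - K + 1 <= wt c)%N.

(* The code with parity-check matrix H : its row space is
   { c | H *m c^T = 0 } = { c | c *m H^T = 0 }. *)
Definition code (a N : nat) (H : 'M[F]_(a, N)) : 'M[F]_N := kermx H^T.

Definition puncture (p N : nat) (C : 'M[F]_(p, N)) (E : {set 'I_N})
  : 'M[F]_(p, #|~: E|) :=
  C *m \matrix_(i < N, j < #|~: E|) ((i == enum_val j)%:R).

(* Local groups (0-indexed): group i = {i} U {m + i r, ..., m + i r + r - 1}. *)
Definition local_group (m r : nat) (i : 'I_m) : {set 'I_(m + m * r)} :=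
  [set j : 'I_(m + m * r) | (val j == val i) ||
                            ((m + i * r <= j) && (j < m + i * r + r))%N].

Definition max_recoverable (m r Delta : nat)
    (H : 'M[F]_(m + Delta, m + m * r)) : Prop :=
  forall E : {set 'I_(m + m * r)},
    (forall i : 'I_m, #|E :&: local_group r i| = 1%N) ->
    MDS_code (puncture (code H) E) (m * r - Delta).

(* The block-diagonal m x (m r) matrix F whose i-th row carries
   (x_i1, ..., x_ir) in columns i r, ..., i r + r - 1 (0-indexed). *)
Definition locF (m r : nat) (x : 'M[F]_(m, r)) : 'M[F]_(m, m * r) :=
  \matrix_(i < m, j < m * r)
     \sum_(l < r) (if val j == (i * r + l)%N then x i l else 0).

Definition pcm (m r Delta : nat) (x : 'M[F]_(m, r))
    (HMDS : 'M[F]_(Delta, m * r)) : 'M[F]_(m + Delta, m + m * r) :=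
  block_mx 1%:M (locF x) 0 HMDS.

End Codes.

From HB Require Import structures.
From mathcomp Require Import all_boot all_order all_algebra all_field.
From mathcomp Require Import zify.
Set Implicit Arguments. Unset Strict Implicit. Unset Printing Implicit Defensive.
Import GRing.Theory.
Local Open Scope ring_scope.

(* Every codeword of the code of [pcm x HMDS] has the form [(- b F^T, b)] with
   [b] in the MDS code.  The rows of [x] are chosen greedily, row [k] being
   [(1, t, ..., t^(r-1))]; the invariant is that puncturing on a transversal
   using the local parities of all groups [>= k] keeps every nonzero codeword
   of weight more than [Delta].  If [t] breaks the invariant, a short codeword
   [c] shows three things: its support [S] meets at most [Delta - 1] groups
   besides [k]; the codewords vanishing off [S] (except at the local parity of
   [k]) share a coordinate in group [k] that is nonzero on all nonzero ones,
   so they form a line; and [t] is a root of the polynomial of degree [< r]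
   read off group [k] of [c].  Such supports are described by at most
   [(m+1)^(Delta-1) 2^(Delta (r+1))] patterns, so a field with
   [O(n^(Delta-1))] elements leaves a good [t]. *)

Lemma card_bigcup_le (T I : finType) (A : I -> {set T}) :
  (#|\bigcup_(i : I) A i| <= \sum_(i : I) #|A i|)%N.
Proof.
apply: (big_ind2 (fun (X : {set T}) (n : nat) => #|X| <= n)%N) => [|X n Y n' hX hY|//].
  by rewrite cards0.
by apply: leq_trans (leq_card_setU _ _) _; apply: leq_add.
Qed.

(* Exchanging [u] for [v] in [E] can only lose the coordinate [v] and gain [u]. *)
Lemma card_setD_swap (T : finType) (S E : {set T}) (u v : T) :
  v \notin E -> (#|S :\: E| < #|S :\: (E :\ u :|: [set v])|)%N ->
  u \in S /\ v \notin S.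
Proof.
move=> vE lt_SE.
have sub : S :\: (E :\ u :|: [set v]) \subset (S :\: E) :\ v :|: S :&: [set u].
  apply/subsetP => q; rewrite !inE negb_or negb_and negbK.
  case/andP => /andP [/orP [qu|qE] qv] qS; first by rewrite qu qS orbT.
  by rewrite qv qE qS.
have le_u : (#|S :&: [set u]| <= (u \in S))%N.
  case: (boolP (u \in S)) => uS; first by rewrite /= -(cards1 u) subset_leq_card ?subsetIr.
  rewrite leqn0 cards_eq0; apply/eqP/setP => q; rewrite !inE.
  by case: (q =P u) => [->|]; rewrite ?(negbTE uS) ?andbF.
have := leq_trans lt_SE (leq_trans (subset_leq_card sub) (leq_card_setU _ _)).
rewrite [#|S :\: E|](cardsD1 v) !inE (negbTE vE) /= => lt.
by case: (u \in S) le_u lt; case: (v \in S) => /=; lia.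
Qed.

Section Puncture.
Variable F : fieldType.

Definition supp n (c : 'rV[F]_n) : {set 'I_n} := [set j | c 0 j != 0].

Definition puncture_mx n (E : {set 'I_n}) : 'M[F]_(n, #|~: E|) :=
  \matrix_(i < n, j < #|~: E|) ((i == enum_val j)%:R).

Lemma puncture_mxE n (E : {set 'I_n}) (c : 'rV[F]_n) j :
  (c *m puncture_mx E) 0 j = c 0 (enum_val j).
Proof.
rewrite mxE (bigD1 (enum_val j)) //= mxE eqxx mulr1 big1 ?addr0 // => i ij.
by rewrite mxE (negbTE ij) mulr0.
Qed.

Lemma wt_puncture n (E : {set 'I_n}) (c : 'rV[F]_n) :
  wt (c *m puncture_mx E) = #|supp c :\: E|.
Proof.
rewrite /wt -(card_imset _ (@enum_val_inj _ (~: E))); apply: eq_card => q.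
apply/imsetP/idP => [[j]|].
  rewrite inE puncture_mxE => cj ->; rewrite in_setD inE cj andbT.
  by have := enum_valP j; rewrite inE.
rewrite in_setD inE => /andP [qE cq]; have qCE : q \in ~: E by rewrite inE.
exists (enum_rank_in qCE q); last by rewrite enum_rankK_in.
by rewrite inE puncture_mxE enum_rankK_in.
Qed.

Lemma wt0 n : wt (0 : 'rV[F]_n) = 0%N.
Proof. by apply/eqP; rewrite cards_eq0; apply/eqP/setP => j; rewrite !inE mxE eqxx. Qed.

Lemma puncture_MDS p n (C : 'M[F]_(p, n)) (E : {set 'I_n}) K :
  \rank C = K ->
  (forall c, (c <= C)%MS -> c != 0 -> (#|~: E| - K < #|supp c :\: E|)%N) ->
  MDS_code (puncture C E) K.
Proof.
move=> rkC wtC; rewrite -[puncture C E]/(C *m puncture_mx E); split.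
  rewrite -rkC; apply/mxrank_injP; rewrite -submx0; apply/rV_subP => u.
  rewrite sub_capmx sub_kermx submx0 => /andP [uC /eqP uP]; apply: contraT => u0.
  by have := wtC u uC u0; rewrite -wt_puncture uP wt0.
move=> c' c'CP c'0.
set c := c' *m pinvmx (C *m puncture_mx E) *m C.
have c'E : c' = c *m puncture_mx E by rewrite /c -mulmxA mulmxKpV.
have c0 : c != 0 by apply: contra c'0 => /eqP c0; rewrite c'E c0 mul0mx.
by rewrite c'E wt_puncture addn1; apply: wtC; rewrite ?submxMl.
Qed.

End Puncture.

Lemma card_roots_lt (R : finIdomainType) (p : {poly R}) :
  p != 0 -> (#|[set t | root p t]| < size p)%N.
Proof.
move=> p0; rewrite cardE; apply: max_poly_roots p0 _ (enum_uniq _).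
by apply/allP => t; rewrite mem_enum inE.
Qed.

Section Construction.
Variables m r' d : nat.
Local Notation r := r'.+1.
Local Notation N := (m + m * r)%N.

Lemma dpos_subproof (i : 'I_m) (l : 'I_r) : (i * r + l < m * r)%N.
Proof. by have := ltn_ord i; have := ltn_ord l; nia. Qed.

Definition dpos (i : 'I_m) (l : 'I_r) : 'I_(m * r) := Ordinal (dpos_subproof i l).

Lemma dgroup_subproof (j : 'I_(m * r)) : (j %/ r < m)%N.
Proof. by rewrite ltn_divLR. Qed.

Definition dgroup (j : 'I_(m * r)) : 'I_m := Ordinal (dgroup_subproof j).
Definition dslot (j : 'I_(m * r)) : 'I_r := Ordinal (ltn_pmod j (ltn0Sn r')).

Lemma dposE j : dpos (dgroup j) (dslot j) = j.
Proof. by apply: val_inj; rewrite /= -divn_eq. Qed.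

Lemma dgroupK i l : dgroup (dpos i l) = i.
Proof. by apply: val_inj; rewrite /= divnMDl // divn_small ?addn0. Qed.

Lemma dslotK i l : dslot (dpos i l) = l.
Proof. by apply: val_inj; rewrite /= modnMDl modn_small. Qed.

Definition lpar (i : 'I_m) : 'I_N := lshift (m * r) i.
Definition dcoord (i : 'I_m) (l : 'I_r) : 'I_N := rshift m (dpos i l).

Definition group_of (p : 'I_N) : 'I_m :=
  match split p with inl i => i | inr j => dgroup j end.

(* Position inside the group: [ord0] is the local parity. *)
Definition slot_of (p : 'I_N) : 'I_r.+1 :=
  match split p with inl _ => ord0 | inr j => lift ord0 (dslot j) end.

Variant coord_spec : 'I_N -> Type :=
  | LparCoord i : coord_spec (lpar i)
  | DataCoord i l : coord_spec (dcoord i l).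

Lemma coordP p : coord_spec p.
Proof.
rewrite -(splitK p); case: (split p) => [i|j]; first exact: LparCoord.
by rewrite /= -(dposE j); apply: DataCoord.
Qed.

Lemma group_of_lpar i : group_of (lpar i) = i.
Proof. by rewrite /group_of /lpar -[lshift _ _]/(unsplit (inl _)) unsplitK. Qed.

Lemma group_of_dcoord i l : group_of (dcoord i l) = i.
Proof. by rewrite /group_of /dcoord -[rshift _ _]/(unsplit (inr _)) unsplitK dgroupK. Qed.

Lemma slot_of_lpar i : slot_of (lpar i) = ord0.
Proof. by rewrite /slot_of /lpar -[lshift _ _]/(unsplit (inl _)) unsplitK. Qed.

Lemma slot_of_dcoord i l : slot_of (dcoord i l) = lift ord0 l.
Proof. by rewrite /slot_of /dcoord -[rshift _ _]/(unsplit (inr _)) unsplitK dslotK. Qed.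

Lemma lpar_neq_dcoord i i' l : lpar i != dcoord i' l.
Proof.
apply/eqP => /(congr1 slot_of); rewrite slot_of_lpar slot_of_dcoord => /eqP.
by rewrite (negbTE (neq_lift _ _)).
Qed.

Lemma coord_inj p q : group_of p = group_of q -> slot_of p = slot_of q -> p = q.
Proof.
case: p / coordP => [i|i l]; case: q / coordP => [i'|i' l'];
  rewrite ?group_of_lpar ?group_of_dcoord ?slot_of_lpar ?slot_of_dcoord.
- by move=> ->.
- by move=> _ /eqP; rewrite (negbTE (neq_lift _ _)).
- by move=> _ /eqP; rewrite eq_sym (negbTE (neq_lift _ _)).
- by move=> -> /lift_inj ->.
Qed.

Lemma in_local_group p (i : 'I_m) : (p \in local_group r i) = (group_of p == i).
Proof.
rewrite inE; case: p / coordP => [i'|i' l].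
  rewrite group_of_lpar /=; apply/idP/eqP; last by move=> <-; rewrite eqxx.
  by case/orP => [/eqP /val_inj //|/andP [h _]]; have := ltn_ord i'; lia.
rewrite group_of_dcoord /=; have := ltn_ord i; have := ltn_ord l => hl hi.
apply/idP/eqP; last by move=> <-; apply/orP; right; apply/andP; split; lia.
case/orP => [/eqP|/andP [h1 h2]]; first lia.
by apply: val_inj; case: (ltngtP i' i) => // lt; nia.
Qed.

Definition one_per_group (E : {set 'I_N}) :=
  forall i : 'I_m, #|E :&: local_group r i| = 1%N.

Lemma one_per_groupP E :
  one_per_group E <->
  (forall i, exists2 e, e \in E & group_of e = i) /\ {in E &, injective group_of}.
Proof.
split=> [hE|[hex hinj] i].
  have hE1 i : exists e, E :&: local_group r i = [set e] by apply/cards1P; rewrite hE.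
  split=> [i|p q pE qE gpq].
    have [e he] := hE1 i; have : e \in E :&: local_group r i by rewrite he set11.
    by rewrite in_setI in_local_group => /andP [eE /eqP]; exists e.
  have [e he] := hE1 (group_of p).
  have mem z : z \in E -> group_of z = group_of p -> z = e.
    by move=> zE gz; apply/set1P; rewrite -he in_setI zE in_local_group gz eqxx.
  by rewrite (mem p pE) // (mem q qE).
apply/eqP/cards1P; have [e eE ge] := hex i; exists e; apply/setP => q.
rewrite in_setI in_local_group in_set1; apply/andP/eqP => [[qE /eqP gq]|->].
  by apply: hinj; rewrite ?gq.
by rewrite eE ge.
Qed.

Lemma one_per_group_swap E k l :
  one_per_group E -> dcoord k l \in E ->
  one_per_group (E :\ dcoord k l :|: [set lpar k]).
Proof.
move=> /one_per_groupP [hex hinj] klE; apply/one_per_groupP; split=> [i|].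
  have [-> | ik] := eqVneq i k.
    by exists (lpar k); rewrite ?group_of_lpar // !inE eqxx orbT.
  have [e eE ge] := hex i; exists e => //; rewrite !inE eE andbT.
  apply/orP; left; apply/eqP => ekl.
  by move: ik; rewrite -ge ekl group_of_dcoord eqxx.
have gk p : p != dcoord k l -> p \in E -> group_of p != k.
  move=> pkl pE; apply: contra pkl => /eqP gp.
  by apply/eqP/hinj; rewrite ?gp ?group_of_dcoord.
move=> p q; rewrite !inE.
move=> /orP [/andP [pkl pE]|/eqP ->] /orP [/andP [qkl qE]|/eqP ->] //;
  rewrite ?group_of_lpar => g.
- exact: hinj.
- by have := gk p pkl pE; rewrite g eqxx.
- by have := gk q qkl qE; rewrite g eqxx.
Qed.

Lemma card_one_per_group E : one_per_group E -> #|E| = m.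
Proof.
move=> /one_per_groupP [hex hinj]; rewrite -(card_in_imset hinj).
have -> : group_of @: E = [set: 'I_m].
  by apply/setP => i; rewrite inE; have [e eE ge] := hex i; apply/imsetP; exists e.
by rewrite cardsT card_ord.
Qed.

(* A pattern names up to [d] groups besides a distinguished group [k] (slot
   [None] stands for [k]) and a set of (slot, position in group) pairs; every
   support meeting at most [d] groups besides [k] is described by one. *)
Definition pattern := ({ffun 'I_d -> option 'I_m} * {set option 'I_d * 'I_r.+1})%type.

Definition pattern_group (k : 'I_m) (f : {ffun 'I_d -> option 'I_m}) (s : option 'I_d) :=
  if s is Some s then odflt k (f s) else k.

Definition pattern_set k (p : pattern) : {set 'I_N} :=
  [set q | [exists s, ((s, slot_of q) \in p.2) && (pattern_group k p.1 s == group_of q)]].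

Lemma pattern_of_support k (S : {set 'I_N}) :
  (#|group_of @: S :\ k| <= d)%N -> exists p, pattern_set k p = S.
Proof.
set G := group_of @: S :\ k => leG.
set f : {ffun 'I_d -> option 'I_m} := [ffun s : 'I_d => nth None [seq Some i | i <- enum G] s].
exists (f, [set sl | [exists q in S,
   (group_of q == pattern_group k f sl.1) && (slot_of q == sl.2)]]).
apply/setP => q; rewrite inE; apply/existsP/idP => [[s]|qS].
  rewrite inE /= => /andP [/existsP [q' /and3P [q'S /eqP gq' /eqP sq']] /eqP gq].
  by rewrite -(coord_inj (etrans gq' gq) sq').
have [gk|gk] := eqVneq (group_of q) k.
  exists None; rewrite /= gk eqxx andbT inE.
  by apply/existsP; exists q; rewrite qS gk !eqxx.
have qG : group_of q \in G by rewrite !inE gk; apply/imsetP; exists q.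
have ltd : (index (group_of q) (enum G) < d)%N.
  by apply: leq_trans leG; rewrite cardE index_mem mem_enum.
have fq : pattern_group k f (Some (Ordinal ltd)) = group_of q.
  by rewrite /= ffunE (nth_map k) ?nth_index ?index_mem ?mem_enum.
exists (Some (Ordinal ltd)); rewrite fq eqxx andbT inE.
by apply/existsP; exists q; rewrite qS fq !eqxx.
Qed.

Lemma card_pattern : #|{: pattern}| = (m.+1 ^ d * 2 ^ (d.+1 * r.+1))%N.
Proof.
rewrite card_prod card_ffun !card_option !card_ord -cardsT -powersetT card_powerset.
by rewrite cardsT card_prod card_option !card_ord.
Qed.

Section Codewords.
Variable F : fieldType.
Variable HMDS : 'M[F]_(d.+1, m * r).
Implicit Types (x y : 'M[F]_(m, r)) (b : 'rV[F]_(m * r)).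

(* By [code_pcmP], the codewords of [pcm x HMDS] are exactly these. *)
Definition codeword x b : 'rV[F]_N := b *m row_mx (- (locF x)^T) 1%:M.

Lemma codeword_lpar x b i :
  codeword x b 0 (lpar i) = - \sum_(l < r) x i l * b 0 (dpos i l).
Proof.
rewrite /codeword mul_mx_row row_mxEl mulmxN mxE; congr (- _).
rewrite mxE; under eq_bigr => j _ do rewrite mxE [locF _ _ _]mxE mulr_sumr.
rewrite exchange_big; apply: eq_bigr => l _.
rewrite (bigD1 (dpos i l)) //= eqxx big1 ?addr0 1?mulrC // => j jil.
case: eqP => [jE|_]; last by rewrite mulr0.
by move: jil; rewrite -(inj_eq val_inj) /= jE eqxx.
Qed.

Lemma codeword_rshift x b j : codeword x b 0 (rshift m j) = b 0 j.
Proof. by rewrite /codeword mul_mx_row row_mxEr mulmx1. Qed.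

Lemma codeword_dcoord x b i l : codeword x b 0 (dcoord i l) = b 0 (dpos i l).
Proof. exact: codeword_rshift. Qed.

Lemma codeword_agree x x' k b p :
  (forall i l, i != k -> x i l = x' i l) -> p != lpar k ->
  codeword x b 0 p = codeword x' b 0 p.
Proof.
move=> xx'; case: p / coordP => [i ik|i l _]; last by rewrite !codeword_dcoord.
rewrite !codeword_lpar; congr (- _); apply: eq_bigr => l _; congr (_ * _).
by apply: xx'; apply: contra ik => /eqP ->.
Qed.

Lemma code_pcmP x c :
  (c <= code (pcm x HMDS))%MS ->
  (rsubmx c <= code HMDS)%MS /\ c = codeword x (rsubmx c).
Proof.
rewrite /code sub_kermx /pcm tr_block_mx trmx1 trmx0 -{1}(hsubmxK c) mul_row_block.
rewrite row_mx_eq0 mulmx1 mulmx0 add0r => /andP [/eqP c_loc /eqP c_glob].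
split; first by rewrite sub_kermx c_glob.
rewrite /codeword mul_mx_row mulmx1 mulmxN -{1}(hsubmxK c); congr row_mx.
by apply/eqP; rewrite -addr_eq0 c_loc.
Qed.

Lemma rank_code_pcm x : \rank (code (pcm x HMDS)) = \rank (code HMDS).
Proof.
set U : 'M[F]_N := block_mx 1%:M (- locF x) 0 1%:M.
have freeU : row_free U by rewrite row_free_unit unitmxE det_ublock !det1 mulr1 unitr1.
have rk_pcm : \rank (pcm x HMDS) = (m + \rank HMDS)%N.
  rewrite -(mxrankMfree _ freeU) /pcm /U mulmx_block !mul1mx !mulmx0 !mul0mx !mulmx1.
  by rewrite addr0 add0r addNr add0r rank_diag_block_mx mxrank1.
by rewrite /code !mxrank_ker !mxrank_tr rk_pcm subnDl.
Qed.

(* The local parity of a group is a combination of its data coordinates with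
   coefficients [y i l], so a codeword vanishing on all but one coordinate [e]
   of a group vanishes at [e] too, provided [e]'s coefficient is nonzero. *)
Lemma codeword_group_vanish y b e :
  (e = lpar (group_of e) \/ forall l, y (group_of e) l != 0) ->
  (forall q, group_of q = group_of e -> q != e -> codeword y b 0 q = 0) ->
  codeword y b 0 e = 0.
Proof.
case: e / coordP => [i|i l0]; rewrite ?group_of_lpar ?group_of_dcoord => ye vanish.
  rewrite codeword_lpar big1 ?oppr0 // => l _.
  by rewrite -(codeword_dcoord y) vanish ?mulr0 ?group_of_dcoord // eq_sym lpar_neq_dcoord.
case: ye => [/esym/eqP|ynz]; first by rewrite (negbTE (lpar_neq_dcoord _ _ _)).
have : codeword y b 0 (lpar i) = 0 by rewrite vanish ?group_of_lpar ?lpar_neq_dcoord.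
rewrite codeword_lpar (bigD1 l0) //= big1 ?addr0.
  by move/eqP; rewrite oppr_eq0 mulf_eq0 (negbTE (ynz l0)) -(codeword_dcoord y) => /eqP.
move=> l ll0; rewrite -(codeword_dcoord y) vanish ?mulr0 ?group_of_dcoord //.
by apply: contra ll0 => /eqP /(congr1 slot_of); rewrite !slot_of_dcoord => /lift_inj ->.
Qed.

Definition recoverable_from x k :=
  forall E, one_per_group E -> (forall i : 'I_m, (k <= i)%N -> lpar i \in E) ->
  forall b, (b <= code HMDS)%MS -> b != 0 -> (d.+1 < #|supp (codeword x b) :\: E|)%N.

Hypothesis HMDS_MDS : MDS_code (code HMDS) (m * r - d.+1).

Lemma recoverable_from0 x : recoverable_from x 0.
Proof.
move=> E /one_per_groupP [_ injE] lparE b bC b0.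
have wt_b : (d.+1 < wt b)%N.
  have := HMDS_MDS.2 b bC b0; have : (wt b <= m * r)%N.
    by rewrite /wt; apply: leq_trans (max_card _) _; rewrite card_ord.
  by lia.
apply: leq_trans wt_b _; rewrite /wt -(card_imset _ (@rshift_inj m (m * r))).
apply/subset_leq_card/subsetP => q /imsetP [j]; rewrite inE => bj ->.
rewrite in_setD inE codeword_rshift bj andbT -(dposE j); apply/negP => jE.
have := injE _ _ (lparE (dgroup j) isT) jE.
rewrite group_of_lpar group_of_dcoord => /(_ erefl) /eqP.
by rewrite (negbTE (lpar_neq_dcoord _ _ _)).
Qed.

Lemma max_recoverable_from x : recoverable_from x m -> max_recoverable (pcm x HMDS).
Proof.
move=> xm E hE; apply: puncture_MDS; first by rewrite rank_code_pcm HMDS_MDS.1.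
move=> c cC c0; have [bC c_cw] := code_pcmP cC.
have b0 : rsubmx c != 0 by apply: contra c0 => /eqP b0; rewrite c_cw b0 /codeword mul0mx.
have lparE (i : 'I_m) : (m <= i)%N -> lpar i \in E by rewrite leqNgt ltn_ord.
have := xm E hE lparE _ bC b0; rewrite -c_cw.
have := cardsC E; rewrite card_one_per_group // card_ord.
by move: #|~: E| => n; lia.
Qed.

End Codewords.

Section Greedy.
Variable F : finFieldType.
Variable HMDS : 'M[F]_(d.+1, m * r).
Implicit Types (x y : 'M[F]_(m, r)) (b : 'rV[F]_(m * r)) (k : 'I_m) (S : {set 'I_N}).
Local Notation recoverable_from := (recoverable_from HMDS).

Definition vrow x k (t : F) : 'M[F]_(m, r) :=
  \matrix_(i, l) if i == k then t ^+ l else x i l.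

Definition nonzero_rows_below x (k : nat) := forall (i : 'I_m) l, (i < k)%N -> x i l != 0.

Definition vanishes_off x k S b : bool :=
  (b <= code HMDS)%MS &&
  [forall q, (q != lpar k) ==> (codeword x b 0 q != 0) ==> (q \in S)].

Definition pinned x k S (j0 : 'I_r) : bool :=
  [forall b, vanishes_off x k S b && (b != 0) ==> (b 0 (dpos k j0) != 0)].

Definition group_poly k b : {poly F} := \poly_(l < r) b 0 (dpos k (inord l)).

Lemma horner_group_poly k b t :
  (group_poly k b).[t] = \sum_(l < r) b 0 (dpos k l) * t ^+ l.
Proof. by rewrite horner_poly; apply: eq_bigr => l _; rewrite inord_val. Qed.

Lemma coef_group_poly k b (j : 'I_r) : (group_poly k b)`_j = b 0 (dpos k j).
Proof. by rewrite coef_poly ltn_ord inord_val. Qed.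

Lemma vanishes_off_comb x k S b e (a c : F) :
  vanishes_off x k S b -> vanishes_off x k S e -> vanishes_off x k S (a *: b + c *: e).
Proof.
move=> /andP [bC /forallP bS] /andP [eC /forallP eS]; apply/andP; split.
  by rewrite addmx_sub ?scalemx_sub.
apply/forallP => q; apply/implyP => qk; apply/implyP; apply: contraR => qS.
have b0 : codeword x b 0 q = 0.
  by apply/eqP; apply: contraNT qS; have := bS q; rewrite qk /= => /implyP.
have e0 : codeword x e 0 q = 0.
  by apply/eqP; apply: contraNT qS; have := eS q; rewrite qk /= => /implyP.
have -> : codeword x (a *: b + c *: e) = a *: codeword x b + c *: codeword x e.
  by rewrite /codeword mulmxDl -!scalemxAl.
by move: (codeword x b) (codeword x e) b0 e0 => u v u0 v0; rewrite !mxE u0 v0 !mulr0 addr0 eqxx.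
Qed.

(* The nonzero members of a pinned space are all proportional. *)
Lemma pinned_root x k S j0 b0 b1 t :
  pinned x k S j0 -> vanishes_off x k S b0 -> vanishes_off x k S b1 -> b1 != 0 ->
  root (group_poly k b1) t -> root (group_poly k b0) t.
Proof.
move=> /forallP pin b0S b1S b10 /rootP rt.
have key b : vanishes_off x k S b -> b != 0 -> b 0 (dpos k j0) != 0.
  by move=> bS bnz; have := pin b; rewrite bS bnz.
set a1 := b1 0 (dpos k j0); set a0 := b0 0 (dpos k j0).
have a10 : a1 != 0 by apply: key.
have comb0 : a1 *: b0 + (- a0) *: b1 = 0.
  apply/eqP; apply: contraT => nz; have := key _ (vanishes_off_comb a1 (- a0) b0S b1S) nz.
  by rewrite !mxE mulNr mulrC subrr eqxx.
have prop l : a1 * b0 0 (dpos k l) = a0 * b1 0 (dpos k l).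
  have /eqP := congr1 (fun M : 'rV[F]_(m * r) => M 0 (dpos k l)) comb0.
  by rewrite /= !mxE mulNr addr_eq0 opprK => /eqP.
apply/rootP/eqP; rewrite -(mulrI_eq0 _ (lregP a10)) horner_group_poly mulr_sumr.
under eq_bigr => l _ do rewrite mulrA prop -mulrA.
by rewrite -mulr_sumr -horner_group_poly rt mulr0.
Qed.

Definition bad_roots x k (p : pattern) : {set F} :=
  [set t | [exists j0, pinned x k (pattern_set k p) j0] &&
           [exists b, [&& vanishes_off x k (pattern_set k p) b, b != 0 &
                          root (group_poly k b) t]]].

Lemma card_bad_roots x k p : (#|bad_roots x k p| <= r')%N.
Proof.
have [->|[t0]] := set_0Vmem (bad_roots x k p); first by rewrite cards0.
rewrite inE => /andP [/existsP [j0 pin] /existsP [b0 /and3P [b0S b00 _]]].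
have b0j0 : b0 0 (dpos k j0) != 0 by have := forallP pin b0; rewrite b0S b00.
have p0 : group_poly k b0 != 0.
  by apply: contraNneq b0j0 => p0; rewrite -coef_group_poly p0 coef0.
have sub : bad_roots x k p \subset [set t | root (group_poly k b0) t].
  apply/subsetP => t; rewrite !inE => /andP [_ /existsP [b1 /and3P [b1S b10 rt]]].
  exact: pinned_root pin b0S b1S b10 rt.
apply: leq_trans (subset_leq_card sub) _; rewrite -ltnS.
exact: leq_trans (card_roots_lt p0) (size_poly _ _).
Qed.

Lemma supp_vrow x k t b (E : {set 'I_N}) :
  lpar k \in E ->
  supp (codeword x b) :\: E = supp (codeword (vrow x k t) b) :\: E.
Proof.
move=> kE; apply/setP => q; rewrite !inE.
have [->|qk] := eqVneq q (lpar k); first by rewrite kE.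
by rewrite (codeword_agree (x' := vrow x k t) _ _ qk) // => i l ik; rewrite mxE (negbTE ik).
Qed.

(* A group meeting the support only inside [E] would meet it in a single
   coordinate, which [codeword_group_vanish] rules out. *)
Lemma card_groups_supp y b (E : {set 'I_N}) :
  one_per_group E ->
  (forall e, e \in E -> e = lpar (group_of e) \/ forall l, y (group_of e) l != 0) ->
  (#|group_of @: supp (codeword y b)| <= #|supp (codeword y b) :\: E|)%N.
Proof.
move=> /one_per_groupP [hex injE] Ecoef; set S := supp (codeword y b).
apply: leq_trans (leq_imset_card group_of _); apply/subset_leq_card/subsetP.
move=> _ /imsetP [q0 q0S ->]; apply: contraT => nohit.
have [e eE ge] := hex (group_of q0).
have onlye q : group_of q = group_of q0 -> q \in S -> q = e.
  move=> gq qS; apply: injE; rewrite ?gq //.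
  apply: contraT => qE; case/negP: nohit; apply/imsetP; exists q => //.
  by rewrite in_setD qE qS.
have e0 : codeword y b 0 e = 0.
  apply: codeword_group_vanish (Ecoef e eE) _ => q gq qe.
  by apply/eqP; apply: contraNT qe => qS; apply/eqP/onlye; rewrite ?gq ?inE.
by have q0e := onlye q0 erefl q0S; move: q0S; rewrite q0e inE e0 eqxx.
Qed.


Lemma short_codeword_bad_root x k t (E : {set 'I_N}) b :
  nonzero_rows_below x k -> recoverable_from x k -> t != 0 -> one_per_group E ->
  (forall i : 'I_m, (k < i)%N -> lpar i \in E) ->
  (b <= code HMDS)%MS -> b != 0 ->
  (#|supp (codeword (vrow x k t) b) :\: E| <= d.+1)%N ->
  exists p, t \in bad_roots x k p.
Proof.
move=> xnz xrec t0 hE lparE bC b0; set S := supp _ => short.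
have [Eex Einj] := (one_per_groupP E).1 (hE : one_per_group E).
have lpar_ge (E0 : {set 'I_N}) : (forall i : 'I_m, (k < i)%N -> lpar i \in E0) ->
    lpar k \in E0 -> forall i : 'I_m, (k <= i)%N -> lpar i \in E0.
  by move=> gtE kE i; rewrite leq_eqVlt => /orP [/eqP /val_inj <- //|/gtE].
have kE : lpar k \notin E.
  apply/negP => kE; have := xrec E hE (lpar_ge E lparE kE) b bC b0.
  by rewrite (supp_vrow _ t _ kE) ltnNge short.
have [j0 j0E] : exists j0, dcoord k j0 \in E.
  have [e eE] := Eex k.
  by case: e / coordP eE => [i|i l] eE; rewrite ?group_of_lpar ?group_of_dcoord => ik;
    [rewrite -ik eE in kE | exists l; rewrite -ik].
(* Trading the data coordinate of group [k] in [E] for its local parity gives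
   a transversal on which the invariant for [x] applies. *)
set E' := E :\ dcoord k j0 :|: [set lpar k].
have kE' : lpar k \in E' by rewrite !inE eqxx orbT.
have gtE' (i : 'I_m) : (k < i)%N -> lpar i \in E'.
  by move=> ki; rewrite !inE lparE // lpar_neq_dcoord.
have recE' := xrec E' (one_per_group_swap hE j0E) (lpar_ge E' gtE' kE').
have [j0S kS] : dcoord k j0 \in S /\ lpar k \notin S.
  apply: card_setD_swap kE _; apply: leq_ltn_trans short _.
  by rewrite -/E' -(supp_vrow _ t) // recE'.
have rootb : root (group_poly k b) t.
  move: kS; rewrite inE negbK codeword_lpar oppr_eq0 /root horner_group_poly.
  by under eq_bigr => l _ do rewrite mxE eqxx mulrC.
have pinS : pinned x k S j0.
  apply/forallP => b'; apply/implyP => /andP [/andP [b'C /forallP b'S] b'0].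
  apply: contraTneq (recE' b' b'C b'0) => b'j0; rewrite -leqNgt.
  apply: leq_trans short; apply/subset_leq_card/subsetP => q.
  rewrite /E' !inE negb_or negb_and negbK => /andP [/andP [/orP [/eqP qj0|qE] qk] nz].
    by move: nz; rewrite qj0 codeword_dcoord b'j0 eqxx.
  by rewrite qE /=; have := b'S q; rewrite qk nz inE.
have vanb : vanishes_off x k S b.
  rewrite /vanishes_off bC; apply/forallP => q; apply/implyP => qk; apply/implyP.
  by rewrite inE (codeword_agree (x' := vrow x k t) _ _ qk) // => i l ik; rewrite mxE (negbTE ik).
have groupsS : (#|group_of @: S :\ k| <= d)%N.
  have kS' : k \in group_of @: S by apply/imsetP; exists (dcoord k j0); rewrite ?group_of_dcoord.
  suff : (#|group_of @: S| <= d.+1)%N by rewrite (cardsD1 k) kS'.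
  apply: leq_trans short.
  apply: card_groups_supp hE _ => e eE.
  have [gk|gk|/val_inj gk] := ltngtP (group_of e) k.
  - have ek : group_of e != k by rewrite -(inj_eq val_inj) ltn_eqF.
    by right=> l; rewrite mxE (negbTE ek) xnz.
  - by left; apply: Einj; rewrite ?lparE ?group_of_lpar.
  - by right=> l; rewrite gk mxE eqxx expf_neq0.
have [p pS] := pattern_of_support groupsS.
exists p; rewrite inE pS; apply/andP; split; first by apply/existsP; exists j0.
by apply/existsP; exists b; rewrite vanb b0 rootb.
Qed.

Lemma recoverable_from_step x k :
  nonzero_rows_below x k -> recoverable_from x k ->
  (1 + #|{: pattern}| * r' < #|F|)%N ->
  exists x', nonzero_rows_below x' k.+1 /\ recoverable_from x' k.+1.
Proof.
move=> xnz xrec bigF.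
set Bad := [set t : F | (t == 0) || [exists p, t \in bad_roots x k p]].
have cardBad : (#|Bad| <= 1 + #|{: pattern}| * r')%N.
  have sub : Bad \subset [set 0] :|: \bigcup_(p : pattern) bad_roots x k p.
    apply/subsetP => t; rewrite !inE => /orP [->//|/existsP [p tp]].
    by apply/orP; right; apply/bigcupP; exists p.
  apply: leq_trans (subset_leq_card sub) _.
  apply: leq_trans (leq_card_setU _ _) _; rewrite cards1 leq_add2l.
  apply: leq_trans (card_bigcup_le _) _.
  by rewrite -sum_nat_const; apply: leq_sum => p _; apply: card_bad_roots.
have /card_gt0P [t] : (0 < #|~: Bad|)%N.
  by move: cardBad bigF; rewrite -(cardsC Bad); lia.
rewrite !inE negb_or => /andP [t0 /existsPn tgood].
exists (vrow x k t); split=> [i l|E hE lparE b bC b0].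
  rewrite ltnS leq_eqVlt mxE => /orP [/eqP /val_inj ->|ik]; first by rewrite eqxx expf_neq0.
  have ik' : i != k by rewrite -(inj_eq val_inj) ltn_eqF.
  by rewrite (negbTE ik') xnz.
rewrite ltnNge; apply/negP => short.
have [p tp] := short_codeword_bad_root xnz xrec t0 hE lparE bC b0 short.
by have := tgood p; rewrite tp.
Qed.

Lemma exists_recoverable :
  MDS_code (code HMDS) (m * r - d.+1) -> (1 + #|{: pattern}| * r' < #|F|)%N ->
  exists x, recoverable_from x m.
Proof.
move=> HMDS_MDS bigF.
suff /(_ m (leqnn m)) [x [_ xm]] :
    forall k : nat, (k <= m)%N -> exists x, nonzero_rows_below x k /\ recoverable_from x k.
  by exists x.
elim=> [|k IHk] km.
  by exists 0; split=> [i l|]; [rewrite ltn0 | exact: recoverable_from0].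
have [x [xnz xrec]] := IHk (ltnW km).
exact: (recoverable_from_step (k := Ordinal km) xnz xrec bigF).
Qed.

End Greedy.

End Construction.

Lemma pattern_count_lt m r' d : (0 < m)%N ->
  (1 + m.+1 ^ d * 2 ^ (d.+1 * r'.+2) * r'
     < (2 ^ d * 2 ^ (d.+1 * r'.+2) * r'.+1 + 2) * (m * r'.+2) ^ d)%N.
Proof.
move=> m_gt0.
have leA : (m.+1 ^ d <= 2 ^ d * (m * r'.+2) ^ d)%N.
  rewrite -expnMn; case: d => [//|d]; rewrite leq_exp2r //; nia.
have P_gt0 : (0 < (m * r'.+2) ^ d)%N by rewrite expn_gt0 muln_gt0 m_gt0.
move: leA P_gt0; move: (m.+1 ^ d)%N (2 ^ d)%N ((m * r'.+2) ^ d)%N (2 ^ (d.+1 * r'.+2))%N.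
move=> A K P L leA P_gt0.
have : (A * L * r' <= K * P * L * r')%N by rewrite leq_mul2r leq_mul2r leA !orbT.
nia.
Qed.

Theorem theorem4 (r Delta : nat) :
  (1 <= r)%N -> (1 <= Delta)%N ->
  exists C : nat,
    forall m : nat, (1 <= m)%N ->
    forall F : finFieldType,
      (C * (m * (r + 1)) ^ (Delta - 1) <= #|F|)%N ->
      forall HMDS : 'M[F]_(Delta, m * r),
        MDS_code (code HMDS) (m * r - Delta) ->
        exists x : 'M[F]_(m, r), max_recoverable (pcm x HMDS).
Proof.
case: r => [|r'] // _; case: Delta => [|d] // _.
exists (2 ^ d * 2 ^ (d.+1 * r'.+2) * r'.+1 + 2)%N => m m_gt0 F bigF HMDS HMDS_MDS.
have bigF' : (1 + #|{: pattern m r' d}| * r' < #|F|)%N.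
  rewrite card_pattern; apply: leq_trans bigF; rewrite subn1 addn1.
  exact: pattern_count_lt.
have [x xm] := exists_recoverable HMDS_MDS bigF'.
by exists x; apply: max_recoverable_from.
Qed.
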